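(* For a commutative ring $R$ the following are equivalent: (i) every $R$-module has avoidance; (ii) every $R$-algebra is an avoidance ring; (iii) every ring extension of $R$ (every ring $S$ with an injective ring map $R\to S$) is an avoidance ring; (iv) every finitely generated $R$-module has avoidance.
   Context: All rings are commutative with $1\neq 0$. An $R$-module $M$ has avoidance if whenever $M=\bigcup_{k=1}^n M_k$ for finitely many $R$-submodules $M_k$, then $M=M_k$ for some $k$. An ideal $I$ of a ring has avoidance if whenever $I\subseteq\bigcup_{k=1}^n I_k$ for finitely many ideals $I_k$, then $I\subseteq I_k$ for some $k$; a ring is an avoidance ring if every ideal has avoidance. *)

From HB Require Import structures.
From mathcomp Require Import all_boot all_order all_algebra.
Set Implicit Arguments. Unset Strict Implicit. Unset Printing Implicit Defensive.
Import GRing.Theory.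
Local Open Scope ring_scope.

Definition is_submodule (R : comNzRingType) (M : lmodType R) (P : {pred M}) : Prop :=
  0 \in P /\ forall (a : R) (u v : M), u \in P -> v \in P -> a *: u + v \in P.

Definition module_avoidance (R : comNzRingType) (M : lmodType R) : Prop :=
  forall (n : nat) (P : 'I_n -> {pred M}),
    (forall k, is_submodule (P k)) ->
    (forall x : M, exists k, x \in P k) ->
    exists k, forall x : M, x \in P k.

Definition is_ideal (S : comNzRingType) (I : {pred S}) : Prop :=
  0 \in I /\ forall (a u v : S), u \in I -> v \in I -> a * u + v \in I.

Definition ideal_avoidance (S : comNzRingType) (I : {pred S}) : Prop :=
  forall (n : nat) (J : 'I_n -> {pred S}),
    (forall k, is_ideal (J k)) ->
    (forall x, x \in I -> exists k, x \in J k) ->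
    exists k, forall x, x \in I -> x \in J k.

Definition avoidance_ring (S : comNzRingType) : Prop :=
  forall I : {pred S}, is_ideal I -> ideal_avoidance I.

Definition fin_gen_module (R : comNzRingType) (M : lmodType R) : Prop :=
  exists (n : nat) (g : 'I_n -> M),
    forall x : M, exists c : 'I_n -> R, x = \sum_(i < n) c i *: g i.

From HB Require Import structures.
From mathcomp Require Import all_boot all_order all_algebra.
From Stdlib Require Import Classical.
Set Implicit Arguments. Unset Strict Implicit. Unset Printing Implicit Defensive.
Import GRing.Theory.
Local Open Scope ring_scope.

(* Every condition reduces to avoidance of the free modules R^n.  If submodules
   P_1, ..., P_n cover a submodule I but none contains it, pick x_k in I \ P_k;
   the preimages of the P_k under the linear map R^n -> I, c |-> sum c_i x_i,
   are submodules covering R^n, none of which contains the k-th basis vector.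
   An ideal of an R-algebra S is an R-submodule of S, so avoidance of every R^n
   gives (i) and (ii).  Conversely R^n is finitely generated, which gives (iv),
   and for (iii) an R-module M sits as the ideal 0 x M in the ring extension
   R x M of R with (r, m)(r', m') = (r r', r m' + r' m). *)

Lemma not_subset_witnesses (T : Type) n (A : {pred T}) (B : 'I_n -> {pred T}) :
  ~ (exists k, {subset A <= B k}) -> exists x : 'I_n -> T, forall k, x k \in A /\ x k \notin B k.
Proof.
move=> nAB; apply: (fin_all_exists (U := fun=> T) (P := fun k y => y \in A /\ y \notin B k)).
move=> k; apply: NNPP => no_x; apply: nAB; exists k => x Ax.
by apply: NNPP => /negP nBx; apply: no_x; exists x.
Qed.

Section Submodules.
Variable R : comNzRingType.

Lemma submodule0 (M : lmodType R) (P : {pred M}) : is_submodule P -> 0 \in P.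
Proof. by case. Qed.

Lemma submoduleD (M : lmodType R) (P : {pred M}) u v :
  is_submodule P -> u \in P -> v \in P -> u + v \in P.
Proof. by case=> _ PC Pu Pv; rewrite -[u]scale1r; apply: PC. Qed.

Lemma submoduleZ (M : lmodType R) (P : {pred M}) a u :
  is_submodule P -> u \in P -> a *: u \in P.
Proof. by case=> P0 PC Pu; rewrite -[_ *: _]addr0; apply: PC. Qed.

Lemma submodule_sum (M : lmodType R) (P : {pred M}) n (c : 'I_n -> R) (x : 'I_n -> M) :
  is_submodule P -> (forall i, x i \in P) -> \sum_(i < n) c i *: x i \in P.
Proof.
move=> subP Px; apply: (big_ind (fun v => v \in P)); first exact: submodule0.
  by move=> u v; apply: submoduleD.
by move=> i _; apply: submoduleZ.
Qed.

Lemma submodule_preimage (N M : lmodType R) (phi : {linear N -> M}) (P : {pred M}) :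
  is_submodule P -> is_submodule [pred u | phi u \in P].
Proof.
move=> subP; split=> [|a u v]; rewrite !inE ?linear0; first exact: submodule0.
by move=> Pu Pv; rewrite linearP; case: subP => _; apply.
Qed.

Lemma fin_gen_rV n : fin_gen_module 'rV[R]_n.
Proof. by exists n, (fun j => delta_mx 0 j) => c; exists (c 0); apply: row_sum_delta. Qed.

End Submodules.

Section LinearCombination.
Variables (R : comNzRingType) (M : lmodType R) (n : nat) (x : 'I_n -> M).

Definition lincomb (c : 'rV[R]_n) : M := \sum_(i < n) c 0 i *: x i.

Lemma lincomb_is_linear : linear lincomb.
Proof.
move=> a u v; rewrite /lincomb scaler_sumr -big_split /=.
by apply: eq_bigr => i _; rewrite !mxE scalerDl scalerA.
Qed.

HB.instance Definition _ :=
  GRing.isLinear.Build R 'rV[R]_n M _ lincomb lincomb_is_linear.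

Lemma lincomb_delta k : lincomb (delta_mx 0 k) = x k.
Proof.
rewrite /lincomb (bigD1 k) //= mxE !eqxx scale1r big1 ?addr0 // => i /negbTE ik.
by rewrite mxE ik andbF scale0r.
Qed.

End LinearCombination.

Section RestrictionOfScalars.
Variables (R S : comNzRingType) (f : {rmorphism R -> S}).

Definition restrict_scalars : Type := S.
HB.instance Definition _ := GRing.Zmodule.on restrict_scalars.

Definition restrict_scale (a : R) (s : restrict_scalars) : restrict_scalars := f a * s.

Lemma restrict_scaleA a b s :
  restrict_scale a (restrict_scale b s) = restrict_scale (a * b) s.
Proof. by rewrite /restrict_scale rmorphM mulrA. Qed.

Lemma restrict_scale1 : left_id 1 restrict_scale.
Proof. by move=> s; rewrite /restrict_scale rmorph1 mul1r. Qed.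

Lemma restrict_scaleDr : right_distributive restrict_scale +%R.
Proof. by move=> a s t; apply: mulrDr. Qed.

Lemma restrict_scaleDl s : {morph restrict_scale^~ s : a b / a + b}.
Proof. by move=> a b; rewrite /restrict_scale rmorphD mulrDl. Qed.

HB.instance Definition _ := GRing.Zmodule_isLmodule.Build R restrict_scalars
  restrict_scaleA restrict_scale1 restrict_scaleDr restrict_scaleDl.

Lemma ideal_submodule (J : {pred S}) :
  is_ideal J -> is_submodule (J : {pred restrict_scalars}).
Proof. by case=> J0 JC; split=> // a u v; apply: JC. Qed.

End RestrictionOfScalars.

Section FreeModuleAvoidance.
Variable R : comNzRingType.
Hypothesis rV_avoidance : forall n, module_avoidance 'rV[R]_n.

Lemma submodule_avoidance (M : lmodType R) (I : {pred M}) n (P : 'I_n -> {pred M}) :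
  is_submodule I -> (forall k, is_submodule (P k)) ->
  (forall u, u \in I -> exists k, u \in P k) ->
  exists k, forall u, u \in I -> u \in P k.
Proof.
move=> subI subP cover; apply: NNPP => /not_subset_witnesses[x xP].
pose Q k := [pred c | lincomb x c \in P k].
have subQ k : is_submodule (Q k) by apply: submodule_preimage.
have coverQ c : exists k, c \in Q k.
  by apply: cover; apply: submodule_sum => // i; case: (xP i).
have [k /(_ (delta_mx 0 k))] := rV_avoidance subQ coverQ.
by rewrite inE lincomb_delta; case: (xP k) => _ /negP.
Qed.

Lemma module_avoidance_of_rV (M : lmodType R) : module_avoidance M.
Proof.
move=> n P subP cover.
have subT : is_submodule (predT : {pred M}) by [].
have [k PkT] := submodule_avoidance subT subP (fun u _ => cover u).
by exists k => u; apply: PkT.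
Qed.

Lemma avoidance_ring_of_rV (S : comNzRingType) (f : {rmorphism R -> S}) :
  avoidance_ring S.
Proof.
move=> I idI n J idJ.
exact: (submodule_avoidance (ideal_submodule f idI) (fun k => ideal_submodule f (idJ k))).
Qed.

End FreeModuleAvoidance.

Section Idealization.
Variables (R : comNzRingType) (M : lmodType R).

Definition idealization : Type := (R * M)%type.
HB.instance Definition _ := GRing.Zmodule.on idealization.

Definition idealization_mul (x y : idealization) : idealization :=
  (x.1 * y.1, x.1 *: y.2 + y.1 *: x.2).

Lemma idealization_mulA : associative idealization_mul.
Proof.
case=> a u [b v] [c w]; rewrite /idealization_mul /=; congr pair; first exact: mulrA.
by rewrite !scalerDr !scalerA -!addrA [c * a]mulrC [c * b]mulrC.
Qed.

Lemma idealization_mulC : commutative idealization_mul.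
Proof. by case=> a u [b v]; rewrite /idealization_mul /= mulrC addrC. Qed.

Lemma idealization_mul1 : left_id (1, 0) idealization_mul.
Proof. by case=> a u; rewrite /idealization_mul /= mul1r scale1r scaler0 addr0. Qed.

Lemma idealization_mulDl : left_distributive idealization_mul +%R.
Proof.
case=> a u [b v] [c w]; rewrite /idealization_mul /=; congr pair; first exact: mulrDl.
by rewrite scalerDl scalerDr -!addrA; congr (_ + _); exact: addrCA.
Qed.

Lemma idealization_one_neq0 : (1, 0) != 0 :> idealization.
Proof. by rewrite xpair_eqE oner_eq0. Qed.

HB.instance Definition _ := GRing.Zmodule_isComNzRing.Build idealization
  idealization_mulA idealization_mulC idealization_mul1 idealization_mulDl
  idealization_one_neq0.

Definition idealization_inj (r : R) : idealization := (r, 0).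

Lemma idealization_inj_is_zmod_morphism : zmod_morphism idealization_inj.
Proof. by move=> a b; congr pair; rewrite subr0. Qed.

Lemma idealization_inj_is_monoid_morphism : monoid_morphism idealization_inj.
Proof. by split=> // a b; congr pair; rewrite !scaler0 addr0. Qed.

HB.instance Definition _ := GRing.isZmodMorphism.Build R idealization
  idealization_inj idealization_inj_is_zmod_morphism.
HB.instance Definition _ := GRing.isMonoidMorphism.Build R idealization
  idealization_inj idealization_inj_is_monoid_morphism.

Lemma idealization_inj_injective : injective idealization_inj.
Proof. by move=> a b []. Qed.

Definition idealization_ideal (P : {pred M}) : {pred idealization} :=
  [pred x | (x.1 == 0) && (x.2 \in P)].

Lemma idealization_ideal_is_ideal P : is_submodule P -> is_ideal (idealization_ideal P).
Proof.
move=> subP; split=> [|[a m] [r u] [s v]]; rewrite !inE /= ?eqxx ?submodule0 //.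
case/andP=> /eqP-> Pu /andP[/eqP-> Pv]; rewrite mulr0 addr0 eqxx scale0r addr0 /=.
by case: subP => _; apply.
Qed.

Lemma module_avoidance_of_ideal_avoidance :
  ideal_avoidance (idealization_ideal predT) -> module_avoidance M.
Proof.
move=> avoid n P subP cover.
have [|k Pk] := avoid n _ (fun k => idealization_ideal_is_ideal (subP k)).
  by case=> r m /andP[r0 _]; have [k Pm] := cover m; exists k; rewrite inE r0.
by exists k => m; have := Pk (0, m); rewrite !inE /= eqxx => /(_ isT) /andP[].
Qed.

End Idealization.

Theorem proposition3p21 (R : comNzRingType) :
  [<->
    (forall M : lmodType R, module_avoidance M);
    (forall (S : comNzRingType) (f : {rmorphism R -> S}), avoidance_ring S);
    (forall (S : comNzRingType) (f : {rmorphism R -> S}), injective f -> avoidance_ring S);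
    (forall M : lmodType R, fin_gen_module M -> module_avoidance M)].
Proof.
tfae=> [avoid S f | avoid S f _ | avoid M _ | avoid M].
- exact: avoidance_ring_of_rV.
- exact: avoid f.
- apply/module_avoidance_of_ideal_avoidance/(avoid _ _ (@idealization_inj_injective _ M)).
  exact: idealization_ideal_is_ideal.
- by apply: module_avoidance_of_rV => n; apply/avoid/fin_gen_rV.
Qed.
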